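(* $\mathrm{Log}_{<1}(\mathbb{R})\not\subseteq\mathrm{Log}_{<1}(\mathbb{Q})$.
   Context: Modal formulas are built from a countable set of propositional variables using $\bot$, $\to$ and one unary modality $\lozenge$. A frame is a pair $(X,R)$; a valuation assigns subsets of $X$ to variables; $x\models\lozenge\varphi$ iff there is $y$ with $xRy$ and $y\models\varphi$. A formula is valid in a frame if true at every point under every valuation. For a metric space $(X,d)$, $\mathrm{Log}_{<1}(X)$ is the set of modal formulas valid in the frame $(X,R_{<1})$, where $xR_{<1}y$ iff $d(x,y)<1$. $\mathbb{R}$ and $\mathbb{Q}$ carry the metric $d(x,y)=|x-y|$. *)

From Stdlib Require Import Reals QArith Qreals.
Open Scope R_scope.

Inductive form : Type :=
  | Var : nat -> form
  | Bot : form
  | Imp : form -> form -> form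
  | Dia : form -> form.

Fixpoint sat {X : Type} (Rel : X -> X -> Prop) (V : nat -> X -> Prop)
  (x : X) (phi : form) : Prop :=
  match phi with
  | Var n => V n x
  | Bot => False
  | Imp a b => sat Rel V x a -> sat Rel V x b
  | Dia a => exists y, Rel x y /\ sat Rel V y a
  end.

Definition valid_in {X : Type} (Rel : X -> X -> Prop) (phi : form) : Prop :=
  forall (V : nat -> X -> Prop) (x : X), sat Rel V x phi.

Definition rel_lt1 {X : Type} (d : X -> X -> R) (x y : X) : Prop := d x y < 1.

Definition Log_lt1 {X : Type} (d : X -> X -> R) (phi : form) : Prop :=
  valid_in (rel_lt1 d) phi.

Definition dist_R (x y : R) : R := Rabs (x - y).
Definition dist_Q (x y : Q) : R := Rabs (Q2R x - Q2R y).

(* On R the formula below says: if near x the closed set [□p] coincides with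
   the open set [◇q], then [□p] holds everywhere near x as soon as it holds
   somewhere near x.  It is valid because the unit ball of R is connected.  On
   Q it fails: cutting Q at an irrational c, put p below c + 1 and q below
   c - 1; then both [□p] and [◇q] hold exactly below c, a set that is clopen
   in Q but not all of the unit ball around a rational just below c. *)

From Stdlib Require Import Reals QArith Qreals.
From Stdlib Require Import ZArith Lra Lia Classical Rtopology.
Open Scope R_scope.

Definition Box (a : form) : form := Imp (Dia (Imp a Bot)) Bot.

Definition connectedness_formula : form :=
  Imp (Box (Imp (Box (Var 0)) (Dia (Var 1))))
   (Imp (Box (Imp (Dia (Var 1)) (Box (Var 0))))
     (Imp (Dia (Box (Var 0))) (Box (Box (Var 0))))).

Lemma sat_Box {X : Type} (Rel : X -> X -> Prop) V x a :
  sat Rel V x (Box a) <-> forall y, Rel x y -> sat Rel V y a.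
Proof.
  simpl; split.
  - intros Hx y Hy. apply NNPP; intros Hya. apply Hx; exists y; auto.
  - intros Hx [y [Hy Hya]]. apply Hya, Hx, Hy.
Qed.

Lemma interval_connected (U W : R -> Prop) a b :
  a <= b -> open_set U -> open_set W ->
  (forall u, a <= u <= b -> U u \/ W u) -> U a -> W b ->
  exists u, a <= u <= b /\ U u /\ W u.
Proof.
  intros Hab HU HW Hcover Ua Wb. apply NNPP; intros Hsep.
  set (E := fun t => a <= t <= b /\ forall u, a <= u <= t -> U u).
  assert (Ea : E a) by (split; [lra | intros u Hu; now replace u with a by lra]).
  assert (Hbound : bound E) by (exists b; intros t [Ht _]; lra).
  destruct (completeness E Hbound (ex_intro _ a Ea)) as [s [Hub Hlub]].
  assert (Has : a <= s) by (apply Hub, Ea).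
  assert (Hsb : s <= b) by (apply Hlub; intros t [Ht _]; lra).
  assert (Happrox : forall e, e < s -> exists t, E t /\ e < t).
  { intros e He. apply NNPP; intros Hnone.
    assert (He_ub : is_upper_bound E e).
    { intros t Et. apply Rnot_lt_le; intros Het. apply Hnone; eauto. }
    specialize (Hlub e He_ub); lra. }
  destruct (Hcover s (conj Has Hsb)) as [Us | Ws].
  - destruct (HU s Us) as [d Hd]. assert (Hdpos := cond_pos d).
    assert (Hsb' : s < b).
    { destruct (Req_dec s b) as [-> | ]; [|lra].
      exfalso; apply Hsep; exists b; repeat split; auto; lra. }
    set (h := Rmin (d / 2) (b - s)).
    assert (Hh : 0 < h <= d / 2 /\ h <= b - s).
    { unfold h; repeat split; [apply Rmin_glb_lt | apply Rmin_l | apply Rmin_r]; lra. }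
    assert (Esh : E (s + h)).
    { split; [lra|]. intros u Hu. destruct (Rlt_or_le u s) as [Hus | Hsu].
      - destruct (Happrox u Hus) as [t [[_ Ut] Hut]]. apply Ut; lra.
      - apply Hd. unfold disc. apply Rabs_def1; lra. }
    specialize (Hub _ Esh); lra.
  - destruct (HW s Ws) as [d Hd]. assert (Hdpos := cond_pos d).
    destruct (Happrox (s - d)) as [t [[Ht Ut] Hdt]]; [lra|].
    assert (Hts : t <= s) by (apply Hub; split; assumption).
    apply Hsep; exists t; repeat split; try lra.
    + apply Ut; lra.
    + apply Hd. unfold disc. apply Rabs_def1; lra.
Qed.

Lemma ball_connected (U W : R -> Prop) x r a b :
  open_set U -> open_set W ->
  (forall u, Rabs (x - u) < r -> U u \/ W u) ->
  Rabs (x - a) < r -> Rabs (x - b) < r -> U a -> W b ->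
  exists u, Rabs (x - u) < r /\ U u /\ W u.
Proof.
  intros HU HW Hcover Ha Hb Ua Wb.
  apply Rabs_def2 in Ha, Hb.
  destruct (Rle_or_lt a b) as [Hab | Hba].
  - destruct (interval_connected U W a b) as [u [Hu UWu]]; auto.
    + intros u Hu. apply Hcover, Rabs_def1; lra.
    + exists u; split; auto. apply Rabs_def1; lra.
  - destruct (interval_connected W U b a) as [u [Hu [Wu Uu]]]; auto; [lra | |].
    + intros u Hu. apply or_comm, Hcover, Rabs_def1; lra.
    + exists u; repeat split; auto; apply Rabs_def1; lra.
Qed.

Lemma Dia_open_R V a : open_set (fun u => sat (rel_lt1 dist_R) V u (Dia a)).
Proof.
  intros u [z [Huz Hz]]. unfold rel_lt1, dist_R in Huz.
  assert (Hd : 0 < 1 - Rabs (u - z)) by lra.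
  exists (mkposreal _ Hd). intros v Hv. unfold disc in Hv; simpl in Hv.
  exists z; split; auto. unfold rel_lt1, dist_R.
  replace (v - z) with ((v - u) + (u - z)) by ring.
  eapply Rle_lt_trans; [apply Rabs_triang | lra].
Qed.

Lemma connectedness_formula_valid_R : Log_lt1 dist_R connectedness_formula.
Proof.
  intros V x. unfold connectedness_formula. cbn [sat]. rewrite !sat_Box.
  intros Hbox_dia Hdia_box [y0 [Hy0 Hbox0]] y1 Hy1.
  apply NNPP; intros Hnbox1.
  set (Dq := fun u => sat (rel_lt1 dist_R) V u (Dia (Var 1))).
  set (Dnp := fun u => sat (rel_lt1 dist_R) V u (Dia (Imp (Var 0) Bot))).
  assert (Hcover : forall u, Rabs (x - u) < 1 -> Dq u \/ Dnp u).
  { intros u Hu. destruct (classic (sat (rel_lt1 dist_R) V u (Box (Var 0)))) as [Hbox | Hnbox].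
    - left. exact (Hbox_dia u Hu Hbox).
    - right. exact (NNPP _ Hnbox). }
  destruct (ball_connected Dq Dnp x 1 y0 y1 (Dia_open_R V _) (Dia_open_R V _) Hcover
              Hy0 Hy1 (Hbox_dia y0 Hy0 Hbox0) (NNPP _ Hnbox1)) as [u [Hu [Hdia Hndia]]].
  exact (Hdia_box u Hu Hdia Hndia).
Qed.

Definition irrational (c : R) : Prop := forall q : Q, Q2R q <> c.

Lemma Z_square_neq_double_square (m d : Z) : (0 < d)%Z -> (m * m <> 2 * (d * d))%Z.
Proof.
  intros Hd. assert (Hd0 : (0 <= d)%Z) by lia.
  revert m Hd. pattern d. apply Z_lt_induction; [| exact Hd0].
  clear d Hd0. intros d IH m Hd Hmd.
  destruct (Z.Even_or_Odd m) as [[k ->] | [k ->]]; [| nia].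
  destruct (Z.Even_or_Odd d) as [[j ->] | [j ->]]; [| nia].
  apply (IH j ltac:(lia) k); [lia | nia].
Qed.

Lemma irrational_sqrt2 : irrational (sqrt 2).
Proof.
  intros [m d] Hq. unfold Q2R in Hq; simpl in Hq.
  assert (Hd : 0 < IZR (Z.pos d)) by (apply IZR_lt; lia).
  assert (Hm : IZR m = sqrt 2 * IZR (Z.pos d)) by (rewrite <- Hq; field; lra).
  apply (Z_square_neq_double_square m (Z.pos d)); [lia |].
  apply eq_IZR. rewrite !mult_IZR, Hm.
  replace (sqrt 2 * IZR (Z.pos d) * (sqrt 2 * IZR (Z.pos d)))
    with (sqrt 2 * sqrt 2 * (IZR (Z.pos d) * IZR (Z.pos d))) by ring.
  rewrite sqrt_sqrt; lra.
Qed.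

Lemma Q2R_dense x y : x < y -> exists q : Q, x < Q2R q < y.
Proof.
  intros Hxy.
  destruct (archimed (/ (y - x))) as [Hn _].
  set (n := up (/ (y - x))) in *.
  assert (Hinv : 0 < / (y - x)) by (apply Rinv_0_lt_compat; lra).
  assert (Hn0 : (0 < n)%Z) by (apply lt_IZR; lra).
  assert (Hnr : 0 < IZR n) by (apply IZR_lt; lia).
  assert (Hgap : 1 < (y - x) * IZR n).
  { apply (Rmult_lt_compat_l (y - x)) in Hn; [| lra].
    rewrite Rinv_r in Hn; lra. }
  destruct (archimed (x * IZR n)) as [Hm Hm'].
  exists (up (x * IZR n) # Z.to_pos n). unfold Q2R; simpl. rewrite Z2Pos.id by exact Hn0.
  split.
  - apply (Rmult_lt_reg_r (IZR n)); [lra |]. field_simplify; lra.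
  - apply (Rmult_lt_reg_r (IZR n)); [lra |]. field_simplify; lra.
Qed.

Lemma Dia_below_Q V a t u :
  (forall v, sat (rel_lt1 dist_Q) V v a <-> Q2R v < t) ->
  sat (rel_lt1 dist_Q) V u (Dia a) <-> Q2R u < t + 1.
Proof.
  intros Ha. simpl. unfold rel_lt1, dist_Q. split.
  - intros [v [Huv Hv]]. apply Ha in Hv. apply Rabs_def2 in Huv. lra.
  - intros Hu. destruct (Q2R_dense (Q2R u - 1) (Rmin t (Q2R u + 1))) as [v [Hv Hvt]].
    { apply Rmin_glb_lt; lra. }
    assert (Hmin_t := Rmin_l t (Q2R u + 1)). assert (Hmin_u := Rmin_r t (Q2R u + 1)).
    exists v; split; [apply Rabs_def1; lra | apply Ha; lra].
Qed.

Lemma Box_below_Q V a t u : irrational (t - 1) ->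
  (forall v, sat (rel_lt1 dist_Q) V v a <-> Q2R v < t) ->
  sat (rel_lt1 dist_Q) V u (Box a) <-> Q2R u < t - 1.
Proof.
  intros Ht Ha. rewrite sat_Box. unfold rel_lt1, dist_Q. split.
  - intros Hu. destruct (Rtotal_order (Q2R u) (t - 1)) as [Hlt | [Heq | Hgt]].
    + exact Hlt.
    + destruct (Ht u Heq).
    + destruct (Q2R_dense (Rmax t (Q2R u - 1)) (Q2R u + 1)) as [v [Htv Hv]].
      { apply Rmax_lub_lt; lra. }
      assert (Hmax_t := Rmax_l t (Q2R u - 1)). assert (Hmax_u := Rmax_r t (Q2R u - 1)).
      assert (Hav : Q2R v < t) by (apply Ha, Hu, Rabs_def1; lra). lra.
  - intros Hu v Huv. apply Ha. apply Rabs_def2 in Huv. lra.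
Qed.

Definition cut_valuation (c : R) (n : nat) (u : Q) : Prop :=
  match n with
  | 0%nat => Q2R u < c + 1
  | _ => Q2R u < c - 1
  end.

Lemma connectedness_formula_fails_Q c :
  irrational c -> ~ Log_lt1 dist_Q connectedness_formula.
Proof.
  intros Hc Hvalid.
  set (V := cut_valuation c).
  assert (Hbox : forall u, sat (rel_lt1 dist_Q) V u (Box (Var 0)) <-> Q2R u < c).
  { intros u. assert (Hc1 : c + 1 - 1 = c) by ring. rewrite <- Hc1.
    apply Box_below_Q; [rewrite Hc1; exact Hc | reflexivity]. }
  assert (Hdia : forall u, sat (rel_lt1 dist_Q) V u (Dia (Var 1)) <-> Q2R u < c).
  { intros u. assert (Hc1 : c - 1 + 1 = c) by ring. rewrite <- Hc1.
    apply Dia_below_Q; reflexivity. }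
  destruct (Q2R_dense (c - 1) c) as [x [Hx1 Hx2]]; [lra |].
  destruct (Q2R_dense c (Q2R x + 1)) as [y [Hy1 Hy2]]; [lra |].
  specialize (Hvalid V x). unfold connectedness_formula in Hvalid. cbn [sat] in Hvalid.
  rewrite !sat_Box in Hvalid.
  assert (Hxy : rel_lt1 dist_Q x y) by (apply Rabs_def1; lra).
  assert (Hxx : rel_lt1 dist_Q x x).
  { unfold rel_lt1, dist_Q. rewrite Rminus_diag, Rabs_R0. lra. }
  enough (Q2R y < c) by lra.
  apply Hbox, (Hvalid ltac:(intros u _ Hu; apply Hdia, Hbox, Hu)
                      ltac:(intros u _ Hu; apply Hbox, Hdia, Hu)
                      (ex_intro _ x (conj Hxx (proj2 (Hbox x) Hx2))) y Hxy).
Qed.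

Theorem proposition4p9 :
  ~ (forall phi : form, Log_lt1 dist_R phi -> Log_lt1 dist_Q phi).
Proof.
  intros Hincl.
  apply (connectedness_formula_fails_Q (sqrt 2) irrational_sqrt2).
  apply Hincl, connectedness_formula_valid_R.
Qed.
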